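(* Let $\mathbb{F}\in\{\mathbb{R},\mathbb{C}\}$. If $S\in\mathsf{GL}_m(\mathbb{F})$ and $T\in\mathsf{GL}_n(\mathbb{F})$ are ideal, then $S\otimes T$ is ideal.
   Context: For $x\in\mathbb{F}^n$, $D_x$ is the diagonal matrix with $(i,i)$-entry $x_i$; $M\ge0$ means every entry of $M$ is a nonnegative real number. For $S\in\mathsf{GL}_n(\mathbb{F})$, $\mathcal{C}(S)=\{x\in\mathbb{F}^n\mid SD_xS^{-1}\ge 0\}$, and $\mathcal{C}_r(S)$ denotes the conical hull (set of nonnegative real linear combinations) of the rows of $S$, viewed as vectors in $\mathbb{F}^n$. An invertible $S$ is a Perron similarity if for some $i$ the column $Se_i$ and the row $e_i^\top S^{-1}$ are both entrywise nonnegative or both entrywise nonpositive (real). A Perron similarity $S$ is called ideal if $\mathcal{C}(S)=\mathcal{C}_r(S)$. $\otimes$ is the Kronecker product. *)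

From HB Require Import structures.
From mathcomp Require Import all_boot all_order all_algebra.
From mathcomp Require Import reals.
From mathcomp Require Export mxtens complex.
Set Implicit Arguments. Unset Strict Implicit. Unset Printing Implicit Defensive.
Import Order.TTheory GRing.Theory Num.Theory.
Local Open Scope ring_scope.

(* For F : numFieldType, [0 <= z] means z is a nonnegative real number
   (for F = complex R: Im z = 0 and Re z >= 0). *)

Definition nonneg_mx (F : numFieldType) m n (M : 'M[F]_(m, n)) : Prop :=
  forall i j, 0 <= M i j.

Definition Dmx (F : numFieldType) n (x : 'rV[F]_n) : 'M[F]_n := diag_mx x.

Definition Ccone (F : numFieldType) n (S : 'M[F]_n) (x : 'rV[F]_n) : Prop :=
  nonneg_mx (S *m Dmx x *m invmx S).

Definition Crcone (F : numFieldType) n (S : 'M[F]_n) (x : 'rV[F]_n) : Prop :=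
  exists c : 'rV[F]_n, (forall j, 0 <= c 0 j) /\ x = c *m S.

Definition perron_similarity (F : numFieldType) n (S : 'M[F]_n) : Prop :=
  S \in unitmx /\
  exists i : 'I_n,
    ((forall j, 0 <= S j i) /\ (forall j, 0 <= invmx S i j)) \/
    ((forall j, S j i <= 0) /\ (forall j, invmx S i j <= 0)).

Definition ideal (F : numFieldType) n (S : 'M[F]_n) : Prop :=
  perron_similarity S /\ forall x, Ccone S x <-> Crcone S x.

From mathcomp Require Import all_boot all_order all_algebra.
From mathcomp Require Import reals.
From mathcomp Require Import mxtens complex.
From mathcomp Require Import ring.
Set Implicit Arguments. Unset Strict Implicit. Unset Printing Implicit Defensive.
Import Order.TTheory GRing.Theory Num.Theory.
Local Open Scope ring_scope.

(* Reshape z in F^(mn) into the m x n matrix Z with Z j l = z_(j,l).  Since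
   C(S) = { x | x S^-1 >= 0 } when S is ideal, the entry ((a,r),(b,q)) of
   (S (x) T) D_z (S (x) T)^-1 is the entry (a,b) of S D_x S^-1, where x_j is the
   entry (r,q) of T D_(Z_j) T^-1.  So z lies in C(S (x) T) iff all these x lie
   in C(S), i.e. iff x S^-1 >= 0; by linearity the i-th entry of x S^-1 is the
   entry (r,q) of T D_w T^-1 for w the i-th row of S^-T Z, so by ideality of T
   the condition becomes S^-T Z T^-1 >= 0, which is z (S (x) T)^-1 >= 0, i.e.
   z in C_r(S (x) T).  The Perron property passes to S (x) T because its
   columns and the rows of its inverse are tensor products of those of the
   factors. *)

Lemma forall_mxtens_index m n (P : 'I_(m * n) -> Prop) :
  (forall k, P k) <-> (forall i j, P (mxtens_index (i, j))).
Proof. by split=> [PP i j | PP k]; [|case: (mxtens_indexP k)]. Qed.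

Section TensorAlgebra.
Variable R : comUnitRingType.
Local Notation idx := (@mxtens_index _ _).

Lemma big_mxtens_index m n (G : 'I_(m * n) -> R) :
  \sum_k G k = \sum_(i < m) \sum_(j < n) G (idx (i, j)).
Proof.
rewrite pair_big (reindex (@mxtens_index m n)) /=; last first.
  by exists (@mxtens_unindex m n) => k _; rewrite (mxtens_indexK, mxtens_unindexK).
by apply: eq_bigr => -[i j].
Qed.

Definition tensvec_mx m n (z : 'rV[R]_(m * n)) : 'M[R]_(m, n) :=
  \matrix_(i, j) z 0 (idx (i, j)).

Lemma tensvec_mx_mul m n p q (z : 'rV[R]_(m * n)) (C : 'M[R]_(m, p)) (D : 'M[R]_(n, q)) :
  tensvec_mx (z *m (C *t D)) = C^T *m tensvec_mx z *m D.
Proof.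
apply/matrixP => i k; rewrite !mxE big_mxtens_index exchange_big.
apply: eq_bigr => l _; rewrite !mxE big_distrl; apply: eq_bigr => j _.
by rewrite !mxE !mxtens_indexK /=; ring.
Qed.

Lemma mulmx_diag_entry m n p (A : 'M[R]_(m, n)) (x : 'rV[R]_n) (C : 'M[R]_(n, p)) a b :
  (A *m diag_mx x *m C) a b = \sum_j A a j * x 0 j * C j b.
Proof. by rewrite mxE; apply: eq_bigr => j _; rewrite mul_mx_diag mxE. Qed.

Definition diag_slice m n (B D : 'M[R]_n) (Z : 'M[R]_(m, n)) r q : 'rV[R]_m :=
  \row_j (B *m diag_mx (row j Z) *m D) r q.

Lemma tens_diag_mx_entry m n (A C : 'M[R]_m) (B D : 'M[R]_n) (z : 'rV[R]_(m * n)) a r b q :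
  ((A *t B) *m diag_mx z *m (C *t D)) (idx (a, r)) (idx (b, q)) =
  (A *m diag_mx (diag_slice B D (tensvec_mx z) r q) *m C) a b.
Proof.
rewrite !mulmx_diag_entry big_mxtens_index; apply: eq_bigr => j _.
rewrite mxE mulmx_diag_entry mulr_sumr mulr_suml; apply: eq_bigr => l _.
by rewrite !mxE !mxtens_indexK /=; ring.
Qed.

Lemma diag_slice_mul m n (B D : 'M[R]_n) (Z : 'M[R]_(m, n)) (C : 'M[R]_m) r q i :
  (diag_slice B D Z r q *m C) 0 i = (B *m diag_mx (row i (C^T *m Z)) *m D) r q.
Proof.
rewrite mulmx_diag_entry mxE.
under eq_bigr do rewrite mxE mulmx_diag_entry mulr_suml.
rewrite exchange_big; apply: eq_bigr => l _.
rewrite !mxE mulr_sumr mulr_suml; apply: eq_bigr => j _.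
by rewrite !mxE; ring.
Qed.

Lemma tens1mx m n : (1%:M : 'M[R]_m) *t (1%:M : 'M[R]_n) = 1%:M.
Proof.
apply/matrixP => i j; case: (mxtens_indexP i) => a r; case: (mxtens_indexP j) => b q.
by rewrite tensmxE !mxE (inj_eq (can_inj (@mxtens_indexK m n))) xpair_eqE -natrM mulnb.
Qed.

Lemma tensmx_unitmx_inv m n (S : 'M[R]_m) (T : 'M[R]_n) :
  S \in unitmx -> T \in unitmx ->
  (S *t T) \in unitmx /\ invmx (S *t T) = invmx S *t invmx T.
Proof.
move=> uS uT; have ST_inv : (S *t T) *m (invmx S *t invmx T) = 1%:M.
  by rewrite tensmx_mul !mulmxV // tens1mx.
have uST := (mulmx1_unit ST_inv).1; split => //.
by rewrite -[invmx _]mulmx1 -ST_inv mulKmx.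
Qed.

End TensorAlgebra.

Section TensorCones.
Variable F : numFieldType.

Lemma nonneg_rowP n (x : 'rV[F]_n) : nonneg_mx x <-> forall j, 0 <= x 0 j.
Proof. by split=> [x_ge0 j | x_ge0 i j]; rewrite ?(ord1 i). Qed.

Lemma nonneg_mulmx_rows m n p (A : 'M[F]_(m, n)) (B : 'M[F]_(n, p)) :
  nonneg_mx (A *m B) <-> forall i, nonneg_mx (row i A *m B).
Proof.
split=> [AB_ge0 i a j | AB_ge0 i j]; first by rewrite -row_mul mxE.
by have := AB_ge0 i 0 j; rewrite -row_mul mxE.
Qed.

Lemma nonneg_tensvec_mx m n (z : 'rV[F]_(m * n)) :
  nonneg_mx z <-> nonneg_mx (tensvec_mx z).
Proof.
rewrite nonneg_rowP forall_mxtens_index.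
by split=> z_ge0 i j; have := z_ge0 i j; rewrite mxE.
Qed.

Lemma Crcone_invmxP n (S : 'M[F]_n) :
  S \in unitmx -> forall x, Crcone S x <-> nonneg_mx (x *m invmx S).
Proof.
move=> uS x; rewrite nonneg_rowP; split=> [[c [c_ge0 ->]] | xS_ge0].
  by rewrite mulmxK.
by exists (x *m invmx S); rewrite mulmxKV.
Qed.

Lemma Ccone_tens_slices m n (S : 'M[F]_m) (T : 'M[F]_n) z :
  S \in unitmx -> T \in unitmx ->
  Ccone (S *t T) z <->
  forall r q, Ccone S (diag_slice T (invmx T) (tensvec_mx z) r q).
Proof.
move=> uS uT; rewrite /Ccone /nonneg_mx /Dmx (tensmx_unitmx_inv uS uT).2.
split=> [Cz r q a b | Cslices K L]; first by rewrite -tens_diag_mx_entry.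
case: (mxtens_indexP K) => a r; case: (mxtens_indexP L) => b q.
by rewrite tens_diag_mx_entry.
Qed.

Lemma Ccone_tensP m n (S : 'M[F]_m) (T : 'M[F]_n) :
  S \in unitmx -> T \in unitmx ->
  (forall x, Ccone S x <-> Crcone S x) -> (forall y, Ccone T y <-> Crcone T y) ->
  forall z, Ccone (S *t T) z <-> nonneg_mx (z *m invmx (S *t T)).
Proof.
move=> uS uT S_ideal T_ideal z.
rewrite Ccone_tens_slices // (tensmx_unitmx_inv uS uT).2.
rewrite nonneg_tensvec_mx tensvec_mx_mul nonneg_mulmx_rows.
setoid_rewrite S_ideal; setoid_rewrite (Crcone_invmxP uS).
setoid_rewrite <- (Crcone_invmxP uT).
setoid_rewrite <- (T_ideal (row _ ((invmx S)^T *m tensvec_mx z))).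
setoid_rewrite nonneg_rowP; rewrite /Ccone /nonneg_mx /Dmx.
split=> H i r q; last by rewrite diag_slice_mul; exact: H.
by rewrite -(diag_slice_mul _ _ _ (invmx S)); exact: H.
Qed.

Lemma perron_similarity_tens m n (S : 'M[F]_m) (T : 'M[F]_n) :
  perron_similarity S -> perron_similarity T -> perron_similarity (S *t T).
Proof.
move=> [uS [i Si]] [uT [k Tk]]; have [uST invST] := tensmx_unitmx_inv uS uT.
split=> //; exists (mxtens_index (i, k)); rewrite invST.
setoid_rewrite forall_mxtens_index; setoid_rewrite tensmxE.
case: Si => -[cS rS]; case: Tk => -[cT rT]; [left|right|right|left]; split=> j l.
all: first [exact: mulr_ge0 | exact: mulr_le0 | exact: mulr_ge0_le0 | exact: mulr_le0_ge0].
Qed.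

Lemma ideal_tens m n (S : 'M[F]_m) (T : 'M[F]_n) :
  ideal S -> ideal T -> ideal (S *t T).
Proof.
move=> [PS S_ideal] [PT T_ideal]; have [uS _] := PS; have [uT _] := PT.
split; first exact: perron_similarity_tens.
move=> z; rewrite (Crcone_invmxP (tensmx_unitmx_inv uS uT).1).
exact: Ccone_tensP.
Qed.

End TensorCones.

Theorem theorem5p1 (R : realType) :
  (forall (m n : nat) (S : 'M[R]_m) (T : 'M[R]_n),
      S \in unitmx -> T \in unitmx -> ideal S -> ideal T -> ideal (S *t T)) /\
  (forall (m n : nat) (S : 'M[R[i]]_m) (T : 'M[R[i]]_n),
      S \in unitmx -> T \in unitmx -> ideal S -> ideal T -> ideal (S *t T)).
Proof. by split=> m n S T _ _; apply: ideal_tens. Qed.
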